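(* Define, for $n\ge 0$, $$d_n(q)=\sum_{\pi\in \mathcal I^C_{2n}(321)}q^{\mathrm{des}^+(\pi)},\qquad p_n(q)=\sum_{\pi\in \mathcal I^C_{2n}(321)}q^{\mathrm{maj}^+(\pi)}$$ (with $\mathcal I^C_0(321)$ consisting of the empty permutation). Then for $n\ge 2$, $$d_n(q)=2d_{n-1}(q)+(q-1)d_{n-2}(q),\qquad p_n(q)=(1+q)p_{n-1}(q)+(q^n-q)p_{n-2}(q).$$
   Context: A permutation $\pi\in\mathcal S_m$ is centrosymmetric if $\pi(i)+\pi(m+1-i)=m+1$ for all $i$; $\mathcal I^C_m(321)$ is the set of centrosymmetric involutions in $\mathcal S_m$ avoiding $321$. For $\pi\in\mathcal S_{2n}$, $\mathrm{Des}^+(\pi)$ is the set of positions $i\in\{1,\dots,n\}$ with $\pi(i)>\pi(i+1)$, $\mathrm{des}^+(\pi)=|\mathrm{Des}^+(\pi)|$ and $\mathrm{maj}^+(\pi)=\sum_{i\in\mathrm{Des}^+(\pi)}i$. *)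

From HB Require Import structures.
From mathcomp Require Import all_boot all_order all_algebra all_fingroup.
Set Implicit Arguments. Unset Strict Implicit. Unset Printing Implicit Defensive.
Import GRing.Theory.

(* Positions are 0-indexed: paper position i (1-based) is ordinal i-1. *)

Definition centrosymmetric (m : nat) (s : {perm 'I_m}) : bool :=
  [forall i, (s i : nat) + s (rev_ord i) == m.-1].

Definition involution (m : nat) (s : {perm 'I_m}) : bool :=
  [forall i, s (s i) == i].

Definition avoids321 (m : nat) (s : {perm 'I_m}) : bool :=
  ~~ [exists i : 'I_m, exists j : 'I_m, exists k : 'I_m,
        [&& i < j, j < k, s j < s i & s k < s j]].

Definition ICinv321 (m : nat) : {set {perm 'I_m}} :=
  [set s | [&& centrosymmetric s, involution s & avoids321 s]].

(* Des^+(s) for s in S_{2n}: positions i in {1..n} (1-based) with s(i) > s(i+1).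
   We return the 1-based positions. *)
Definition DesPlus (n : nat) (s : {perm 'I_(n.*2)}) : seq nat :=
  [seq i <- iota 1 n |
     [exists a : 'I_(n.*2), exists b : 'I_(n.*2),
        [&& (a : nat) == i.-1, (b : nat) == i & s b < s a]]].

Definition desPlus (n : nat) (s : {perm 'I_(n.*2)}) : nat := size (DesPlus s).
Definition majPlus (n : nat) (s : {perm 'I_(n.*2)}) : nat := \sum_(i <- DesPlus s) i.

Definition d_poly (n : nat) : {poly int} :=
  \sum_(s in ICinv321 n.*2) 'X^(desPlus s).

Definition p_poly (n : nat) : {poly int} :=
  \sum_(s in ICinv321 n.*2) 'X^(majPlus s).

From HB Require Import structures.
From mathcomp Require Import all_boot all_order all_algebra all_fingroup.
From mathcomp Require Import zify ring.

(* A 321-avoiding involution s is determined by its excedance word, which reads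
   Up at i < s i, Down at s i < i and Flat at fixed points; the words that occur
   are exactly the Motzkin paths whose flat steps all lie at height 0, the k-th
   Up being matched with the k-th Down.  Centrosymmetry reverses and flips the
   word, so for s in I^C_2n(321) the first half determines s, and these halves
   are the length-n Motzkin prefixes with flat steps at height 0: after any such
   prefix the next step is Up, or else Flat at height 0 and Down above it, so
   there are 2^n of them.  For 321-avoiding involutions a descent at i < n is a
   peak (Up at i, Down at i+1), and by centrosymmetry a descent at n is an Up at
   n.  Appending two steps in all four ways and tracking des^+ and maj^+ gives
   both recurrences. *)

Set Implicit Arguments.
Unset Strict Implicit.
Unset Printing Implicit Defensive.
Import GRing.Theory.

Inductive step := Up | Down | Flat.

Definition step_eqb (a b : step) : bool :=
  match a, b with Up, Up | Down, Down | Flat, Flat => true | _, _ => false end.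

Lemma step_eqbP : Equality.axiom step_eqb.
Proof. by case; case; constructor. Qed.

HB.instance Definition _ := hasDecEq.Build step step_eqbP.

Definition flip_step (x : step) : step :=
  match x with Up => Down | Down => Up | Flat => Flat end.

Lemma flip_stepK : involutive flip_step.
Proof. by case. Qed.

Lemma flip_step_eq z x : (flip_step z == x) = (z == flip_step x).
Proof. by case: z; case: x. Qed.

Definition nsteps (W : nat -> step) (x : step) (c : nat) : nat :=
  count (fun j => W j == x) (iota 0 c).

Lemma nsteps0 W x : nsteps W x 0 = 0.
Proof. by []. Qed.

Lemma nstepsS W x c : nsteps W x c.+1 = nsteps W x c + (W c == x).
Proof. by rewrite /nsteps -addn1 iotaD count_cat /= addn0. Qed.

Lemma leq_nsteps W x a b : a <= b -> nsteps W x a <= nsteps W x b.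
Proof. by move=> /subnKC <-; rewrite /nsteps iotaD count_cat leq_addr. Qed.

Lemma nsteps_lt W x a b : a < b -> W a = x -> nsteps W x a < nsteps W x b.
Proof.
move=> ab Wa; apply: leq_trans (leq_nsteps W x ab).
by rewrite nstepsS Wa eqxx addn1.
Qed.

Lemma eq_nsteps W W' x c :
  (forall j, j < c -> W j = W' j) -> nsteps W x c = nsteps W' x c.
Proof.
move=> eqW; apply: eq_in_count => j; rewrite mem_iota add0n => /andP[_ hj].
by rewrite eqW.
Qed.

Definition motzkin_path (W : nat -> step) (m : nat) : Prop :=
  [/\ forall c, c <= m -> nsteps W Down c <= nsteps W Up c,
      nsteps W Up m = nsteps W Down m &
      forall j, j < m -> W j = Flat -> nsteps W Up j = nsteps W Down j].

(** * Prefixes of Motzkin paths and their descent statistics *)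

Definition motzkin_prefix (u : seq step) : bool :=
  all (fun c => nsteps (nth Flat u) Down c <= nsteps (nth Flat u) Up c)
      (iota 0 (size u).+1) &&
  all (fun j => (nth Flat u j != Flat) ||
                (nsteps (nth Flat u) Up j == nsteps (nth Flat u) Down j))
      (iota 0 (size u)).

Lemma motzkin_prefixP u : motzkin_prefix u <->
  (forall c, c <= size u -> nsteps (nth Flat u) Down c <= nsteps (nth Flat u) Up c) /\
  (forall j, j < size u -> nth Flat u j = Flat ->
     nsteps (nth Flat u) Up j = nsteps (nth Flat u) Down j).
Proof.
split.
  case/andP => /allP ballot /allP flat; split.
    by move=> c hc; apply: ballot; rewrite mem_iota add0n ltnS hc.
  move=> j hj uj; have := flat j.
  by rewrite mem_iota add0n hj uj eqxx => /(_ isT) /eqP.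
case=> ballot flat; apply/andP; split; apply/allP => c.
  by rewrite mem_iota add0n => /andP[_ hc]; exact: ballot.
rewrite mem_iota add0n => /andP[_ hc].
by case: eqP => //= uc; apply/eqP; exact: flat.
Qed.

Lemma motzkin_prefix_height u : motzkin_prefix u ->
  nsteps (nth Flat u) Down (size u) <= nsteps (nth Flat u) Up (size u).
Proof. by case/motzkin_prefixP => ballot _; exact: ballot. Qed.

Definition second_step (u : seq step) : step :=
  if nsteps (nth Flat u) Up (size u) == nsteps (nth Flat u) Down (size u)
  then Flat else Down.

Definition next_steps (u : seq step) : seq step := [:: Up; second_step u].

Lemma second_step_neqUp u : (second_step u == Up) = false.
Proof. by rewrite /second_step; case: ifP. Qed.

Lemma nth_rcons_lt (u : seq step) x j :
  j < size u -> nth Flat (rcons u x) j = nth Flat u j.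
Proof. by move=> hj; rewrite nth_rcons hj. Qed.

Lemma nsteps_rcons (u : seq step) x y c : c <= size u ->
  nsteps (nth Flat (rcons u x)) y c = nsteps (nth Flat u) y c.
Proof.
move=> hc; apply: eq_nsteps => j hj; apply: nth_rcons_lt.
exact: leq_trans hj hc.
Qed.

Lemma motzkin_prefix_rcons u x :
  motzkin_prefix (rcons u x) = motzkin_prefix u && (x \in next_steps u).
Proof.
rewrite /motzkin_prefix size_rcons.
have -> : iota 0 (size u).+2 = iota 0 (size u).+1 ++ [:: (size u).+1].
  by rewrite -addn1 iotaD.
have -> : iota 0 (size u).+1 = iota 0 (size u) ++ [:: size u].
  by rewrite -addn1 iotaD.
rewrite !all_cat /=.
have old_ballot :
    all (fun c => nsteps (nth Flat (rcons u x)) Down c <=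
                  nsteps (nth Flat (rcons u x)) Up c) (iota 0 (size u)) =
    all (fun c => nsteps (nth Flat u) Down c <= nsteps (nth Flat u) Up c)
        (iota 0 (size u)).
  apply: eq_in_all => c; rewrite mem_iota add0n => hc.
  by rewrite !nsteps_rcons // ltnW.
have old_flat :
    all (fun j => (nth Flat (rcons u x) j != Flat) ||
                  (nsteps (nth Flat (rcons u x)) Up j ==
                   nsteps (nth Flat (rcons u x)) Down j)) (iota 0 (size u)) =
    all (fun j => (nth Flat u j != Flat) ||
                  (nsteps (nth Flat u) Up j == nsteps (nth Flat u) Down j))
        (iota 0 (size u)).
  apply: eq_in_all => j; rewrite mem_iota add0n => hj.
  by rewrite nth_rcons_lt // !nsteps_rcons // ltnW.
rewrite {}old_ballot {}old_flat !nstepsS !nsteps_rcons // nth_rcons ltnn eqxx.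
rewrite !andbT /next_steps /second_step !inE.
set a := nsteps _ Down _; set b := nsteps _ Up _.
case: (all _ _) => //=; case: (all _ _) => //=; rewrite ?andbF //.
by case: x; case: (b =P a) => [->|hab]; rewrite /= ?eqxx ?andbT ?andbF ?ltnn //;
  apply/idP/idP; lia.
Qed.

Fixpoint prefix_words (n : nat) : seq (seq step) :=
  if n is n'.+1 then [seq rcons u x | u <- prefix_words n', x <- next_steps u]
  else [:: [::]].

Lemma prefix_wordsS n :
  prefix_words n.+1 = [seq rcons u x | u <- prefix_words n, x <- next_steps u].
Proof. by []. Qed.

Lemma mem_prefix_words n u :
  (u \in prefix_words n) = (size u == n) && motzkin_prefix u.
Proof.
elim: n u => [|n IH] u; first by rewrite inE; case: u.
rewrite prefix_wordsS; case/lastP: u => [|v x].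
  apply/negbTE/negP => /allpairsPdep [w [y [_ _ e]]].
  by have := congr1 size e; rewrite size_rcons.
rewrite size_rcons eqSS motzkin_prefix_rcons andbA.
apply/allpairsPdep/idP => [[w [y [hw hy /rcons_inj [-> ->]]]]|/andP[hv hx]].
  by rewrite -IH hw.
by exists v, x; rewrite IH.
Qed.

Lemma size_prefix_words n u : u \in prefix_words n -> size u = n.
Proof. by rewrite mem_prefix_words => /andP[/eqP]. Qed.

Lemma prefix_words_motzkin n u : u \in prefix_words n -> motzkin_prefix u.
Proof. by rewrite mem_prefix_words => /andP[]. Qed.

Lemma uniq_prefix_words n : uniq (prefix_words n).
Proof.
elim: n => // n IH; rewrite prefix_wordsS; apply: allpairs_uniq_dep => //.
  by move=> u _; rewrite /next_steps /second_step /=; case: ifP.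
by move=> [u1 x1] [u2 x2] _ _ /= /rcons_inj [-> ->].
Qed.

Definition lastUp (u : seq step) : bool := last Flat u == Up.

Lemma lastUp_rcons u x : lastUp (rcons u x) = (x == Up).
Proof. by rewrite /lastUp last_rcons. Qed.

Lemma second_step_lastUp u : motzkin_prefix u -> lastUp u -> second_step u = Down.
Proof.
case/lastP: u => [|v x] //; rewrite lastUp_rcons motzkin_prefix_rcons.
move=> /andP[hv _] /eqP ->.
rewrite /second_step size_rcons !nstepsS !nsteps_rcons // nth_rcons ltnn eqxx /=.
have := motzkin_prefix_height hv.
by set a := nsteps _ Down _; set b := nsteps _ Up _ => hab; case: eqP => //; lia.
Qed.

Lemma second_step_rconsUp u : motzkin_prefix u -> second_step (rcons u Up) = Down.
Proof.
move=> hv; apply: second_step_lastUp; last by rewrite lastUp_rcons.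
by rewrite motzkin_prefix_rcons hv inE eqxx.
Qed.

(* Positions are 1-based as in DesPlus; position [size u] is the middle of the
   centrosymmetric permutation, where u is followed by its flipped reversal. *)
Definition word_descent (u : seq step) (i : nat) : bool :=
  (nth Flat u i.-1 == Up) && ((i == size u) || (nth Flat u i == Down)).

Definition word_des_set (u : seq step) : seq nat :=
  [seq i <- iota 1 (size u) | word_descent u i].
Definition word_des (u : seq step) : nat := size (word_des_set u).
Definition word_maj (u : seq step) : nat := \sum_(i <- word_des_set u) i.

Definition peaks (u : seq step) : seq nat :=
  [seq i <- iota 1 (size u).-1 | (nth Flat u i.-1 == Up) && (nth Flat u i == Down)].

Lemma iota1S k : iota 1 k.+1 = iota 1 k ++ [:: k.+1].
Proof. by rewrite -[k.+1]addn1 iotaD add1n addn1. Qed.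

Lemma word_des_set_split u :
  word_des_set u = peaks u ++ (if lastUp u then [:: size u] else [::]).
Proof.
case/lastP: u => [|v x] //.
rewrite /word_des_set /peaks size_rcons succnK iota1S filter_cat lastUp_rcons.
congr (_ ++ _).
  apply: eq_in_filter => i; rewrite mem_iota => /andP[_ hi].
  by rewrite /word_descent size_rcons (_ : (i == (size v).+1) = false) //; lia.
rewrite /= /word_descent size_rcons eqxx orTb andbT succnK nth_rcons ltnn eqxx.
by case: (x == Up).
Qed.

Lemma peaks_rcons u x :
  peaks (rcons u x) = peaks u ++ (if lastUp u && (x == Down) then [:: size u] else [::]).
Proof.
case/lastP: u => [|v y] //.
rewrite /peaks !size_rcons !succnK iota1S filter_cat lastUp_rcons.
congr (_ ++ _).
  apply: eq_in_filter => i; rewrite mem_iota => /andP[h1 h2].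
  rewrite !nth_rcons !size_rcons.
  by rewrite (_ : i < (size v).+1) 1?(_ : i.-1 < (size v).+1) //; lia.
rewrite /= !nth_rcons !size_rcons ltnSn ltnn !eqxx.
by rewrite (_ : ((size v).+1 < size v) = false) ?ltnn //; lia.
Qed.

Lemma word_desE u : word_des u = size (peaks u) + lastUp u.
Proof. by rewrite /word_des word_des_set_split size_cat; case: (lastUp u). Qed.

Lemma word_majE u : word_maj u = \sum_(i <- peaks u) i + lastUp u * size u.
Proof.
rewrite /word_maj word_des_set_split big_cat /=.
by case: (lastUp u); rewrite /= ?big_seq1 ?big_nil ?mul1n.
Qed.

Lemma size_peaks_rcons u x :
  size (peaks (rcons u x)) = size (peaks u) + (lastUp u && (x == Down)).
Proof. by rewrite peaks_rcons size_cat; case: (_ && _). Qed.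

Lemma sum_peaks_rcons u x :
  \sum_(i <- peaks (rcons u x)) i =
  \sum_(i <- peaks u) i + (lastUp u && (x == Down)) * size u.
Proof.
rewrite peaks_rcons big_cat /=.
by case: (_ && _); rewrite /= ?big_seq1 ?big_nil ?mul1n.
Qed.

Section WordGeneratingFunctions.
Local Open Scope ring_scope.

Definition des_gf (n : nat) : {poly int} := \sum_(u <- prefix_words n) 'X^(word_des u).
Definition maj_gf (n : nat) : {poly int} := \sum_(u <- prefix_words n) 'X^(word_maj u).

Lemma des_gf_extensions u : motzkin_prefix u ->
  \sum_(x <- next_steps u) \sum_(y <- next_steps (rcons u x))
     'X^(word_des (rcons (rcons u x) y)) =
  2%:R * \sum_(x <- next_steps u) 'X^(word_des (rcons u x)) +
  ('X - 1) * 'X^(word_des u) :> {poly int}.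
Proof.
move=> hv; rewrite /next_steps !big_cons !big_nil !addr0 second_step_rconsUp //.
rewrite !word_desE !size_peaks_rcons !lastUp_rcons /= !second_step_neqUp /=.
case hL: (lastUp u); rewrite ?(second_step_lastUp hv hL) /=;
  by rewrite ?addn0 ?add0n ?addn1 ?exprS; ring.
Qed.

Lemma maj_gf_extensions u : motzkin_prefix u ->
  \sum_(x <- next_steps u) \sum_(y <- next_steps (rcons u x))
     'X^(word_maj (rcons (rcons u x) y)) =
  (1 + 'X) * \sum_(x <- next_steps u) 'X^(word_maj (rcons u x)) +
  ('X^((size u).+2) - 'X) * 'X^(word_maj u) :> {poly int}.
Proof.
move=> hv; rewrite /next_steps !big_cons !big_nil !addr0 second_step_rconsUp //.
rewrite !word_majE !sum_peaks_rcons !lastUp_rcons !size_rcons /= !second_step_neqUp /=.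
case hL: (lastUp u); rewrite ?(second_step_lastUp hv hL) /=;
  by rewrite ?mul1n ?mul0n ?addn0 ?add0n !exprD ?exprS ?expr0; ring.
Qed.

Lemma des_gf_rec n : des_gf n.+2 = 2%:R * des_gf n.+1 + ('X - 1) * des_gf n.
Proof.
rewrite /des_gf !prefix_wordsS !big_allpairs_dep.
rewrite [2%:R * _]mulr_sumr [(_ - 1) * _]mulr_sumr -big_split /=.
apply: eq_big_seq => u hu.
by rewrite des_gf_extensions ?(prefix_words_motzkin hu).
Qed.

Lemma maj_gf_rec n :
  maj_gf n.+2 = (1 + 'X) * maj_gf n.+1 + ('X^(n.+2) - 'X) * maj_gf n.
Proof.
rewrite /maj_gf !prefix_wordsS !big_allpairs_dep.
rewrite [(1 + 'X) * _]mulr_sumr [(_ - 'X) * _]mulr_sumr -big_split /=.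
apply: eq_big_seq => u hu.
by rewrite maj_gf_extensions ?(prefix_words_motzkin hu) // (size_prefix_words hu).
Qed.

End WordGeneratingFunctions.

(** * Excedance words of 321-avoiding involutions *)

Section ExcedanceWord.
Variable m : nat.
Implicit Types (s t : {perm 'I_m}) (i j k : 'I_m).

Definition exc_type s i : step :=
  if i < s i then Up else if s i < i then Down else Flat.

Lemma exc_typeU s i : (exc_type s i == Up) = (i < s i).
Proof. by rewrite /exc_type; case: (ltngtP i (s i)). Qed.

Lemma exc_typeD s i : (exc_type s i == Down) = (s i < i).
Proof. by rewrite /exc_type; case: (ltngtP i (s i)). Qed.

Lemma exc_typeF s i : (exc_type s i == Flat) = (s i == i :> nat).
Proof. by rewrite /exc_type; case: (ltngtP i (s i)). Qed.

Lemma involutionK s : involution s -> forall i, s (s i) = i.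
Proof. by move=> inv_s i; apply/eqP; exact: (forallP inv_s i). Qed.

Lemma card_ord_lt c : c <= m -> #|[set v : 'I_m | v < c]| = c.
Proof.
elim: c => [|c IH] hc.
  by apply/eqP; rewrite cards_eq0; apply/eqP/setP => v; rewrite !inE.
rewrite (_ : [set v : 'I_m | v < c.+1] = Ordinal hc |: [set v : 'I_m | v < c]).
  by rewrite cardsU1 IH ?inE /= ?ltnn // ltnW.
by apply/setP => v; rewrite !inE ltnS leq_eqVlt -val_eqE.
Qed.

(* If s i > s j, the s j positions carrying values below s j differ from i and,
   as a later one would complete a 321 with i and j, lie before j: at most
   j - 1 of them, although s j >= j. *)
Lemma avoids321_wexc_max s i j : avoids321 s -> i < j -> j <= s j -> s i <= s j.
Proof.
move=> av ij hj; rewrite leqNgt; apply/negP => hji.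
case: (pickP (fun k : 'I_m => (j < k) && (s k < s j))) => [k /andP[jk skj]|none].
  move/negP: av; apply; apply/existsP; exists i; apply/existsP; exists j.
  by apply/existsP; exists k; rewrite ij jk hji skj.
have card_below : #|[set k | s k < s j]| = s j.
  rewrite -[RHS](card_ord_lt (ltnW (ltn_ord (s j)))).
  rewrite -[RHS](card_preimset _ (@perm_inj _ s)).
  by apply: eq_card => k; rewrite !inE.
have below_sub : [set k | s k < s j] \subset [set k : 'I_m | k < j] :\ i.
  apply/subsetP => k; rewrite !inE => hk.
  have hkj : k <= j by have := none k; rewrite hk andbT => /negbT; rewrite -leqNgt.
  apply/andP; split.
    by apply/negP => /eqP ek; move: hk; rewrite ek ltnNge (ltnW hji).
  rewrite ltn_neqAle hkj andbT; apply/negP => /eqP ekj.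
  by move: hk; rewrite (val_inj ekj) ltnn.
have := subset_leq_card below_sub.
have := cardsD1 i [set k : 'I_m | k < j].
rewrite card_below (card_ord_lt (ltnW (ltn_ord j))) inE ij add1n => ej.
by move=> /(leq_trans hj); rewrite {1}ej ltnn.
Qed.

Lemma avoids321_nonexc_min s i j :
  involution s -> avoids321 s -> i < j -> s i <= i -> s i <= s j.
Proof.
move=> inv_s av ij hi; rewrite leqNgt; apply/negP => hji.
have := avoids321_wexc_max av hji (_ : s i <= s (s i)).
by rewrite !(involutionK inv_s) => /(_ hi); rewrite leqNgt ij.
Qed.

Lemma descent_exc_type s i j : involution s -> avoids321 s -> j = i.+1 :> nat ->
  (s j < s i) = (exc_type s i == Up) && (exc_type s j == Down).
Proof.
move=> inv_s av ej; rewrite exc_typeU exc_typeD.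
have ij : i < j by rewrite ej.
apply/idP/andP => [desc|[hi hj]]; last by rewrite ej ltnS in hj; exact: leq_ltn_trans hj hi.
split; rewrite ltnNge; apply/negP.
  by move=> /(avoids321_nonexc_min inv_s av ij); rewrite leqNgt desc.
by move=> /(avoids321_wexc_max av ij); rewrite leqNgt desc.
Qed.

(* If s and t agree before the excedance i and s i < t i, then the Down step
   s i of t comes from some c > i, and t i > s i = t c contradicts
   [avoids321_wexc_max]. *)
Lemma exc_type_first_mismatch s t i :
  involution s -> involution t -> avoids321 t ->
  (forall k, exc_type s k = exc_type t k) -> (forall k, k < i -> s k = t k) ->
  i < s i -> s i < t i -> False.
Proof.
move=> inv_s inv_t av_t same_type agree hsi hst.
have hDa : t (s i) < s i.
  by rewrite -exc_typeD -same_type exc_typeD (involutionK inv_s).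
set c := t (s i).
have hci : c != i.
  apply/eqP => eci; move: hst.
  by rewrite -[in t i]eci /c involutionK // ltnn.
have hic : i < c.
  rewrite ltn_neqAle eq_sym [_ != _]hci /= leqNgt; apply/negP => hc.
  have := agree c hc; rewrite /c involutionK // => e.
  by move/eqP: hci; apply; apply: (@perm_inj _ s); rewrite e.
have htc : c <= t c by rewrite /c (involutionK inv_t) ltnW.
have := avoids321_wexc_max av_t hic htc.
by rewrite /c (involutionK inv_t) leqNgt hst.
Qed.

Lemma exc_type_inj s t : involution s -> avoids321 s -> involution t -> avoids321 t ->
  (forall k, exc_type s k = exc_type t k) -> s = t.
Proof.
move=> inv_s av_s inv_t av_t same_type.
suff agree_below : forall n (i : 'I_m), i < n -> s i = t i.
  by apply/permP => i; exact: (agree_below i.+1 i (ltnSn _)).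
elim=> // n IH i; rewrite ltnS leq_eqVlt => /orP [/eqP ei | ]; last exact: IH.
have agree : forall k : 'I_m, k < i -> s k = t k by move=> k; rewrite ei; exact: IH.
case: (ltngtP i (s i)) => hsi.
- case: (ltngtP (s i) (t i)) => hst; last exact: val_inj.
    by case: (exc_type_first_mismatch inv_s inv_t av_t same_type agree hsi hst).
  have agree' k : k < i -> t k = s k by move=> /agree ->.
  have hti : i < t i by rewrite -exc_typeU -same_type exc_typeU.
  by case: (exc_type_first_mismatch inv_t inv_s av_s
             (fun k => esym (same_type k)) agree' hti hst).
- apply: (@perm_inj _ t); rewrite (involutionK inv_t).
  by rewrite -agree ?(involutionK inv_s).
- have : exc_type t i == Flat by rewrite -same_type exc_typeF hsi.
  by rewrite exc_typeF => /eqP e; apply: val_inj; rewrite /= e -hsi.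
Qed.

Definition rev_conj_fun s i : 'I_m := rev_ord (s (rev_ord i)).

Lemma rev_conj_fun_inj s : injective (rev_conj_fun s).
Proof. by move=> a b /rev_ord_inj /perm_inj /rev_ord_inj. Qed.

Definition rev_conj s : {perm 'I_m} := perm (@rev_conj_fun_inj s).

Lemma rev_conjE s i : rev_conj s i = rev_ord (s (rev_ord i)).
Proof. by rewrite permE. Qed.

Lemma centrosymmetricP s : reflect (rev_conj s = s) (centrosymmetric s).
Proof.
apply: (iffP forallP) => [sym|fixed i].
  apply/permP => i; apply: val_inj; rewrite rev_conjE /=.
  have := eqP (sym (rev_ord i)); rewrite rev_ordK.
  by have := ltn_ord (s (rev_ord i)); lia.
rewrite -{1}fixed rev_conjE /=.
by apply/eqP; have := ltn_ord (s (rev_ord i)); lia.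
Qed.

Lemma rev_conj_involution s : involution s -> involution (rev_conj s).
Proof.
by move=> inv_s; apply/forallP => i; rewrite !rev_conjE rev_ordK involutionK ?rev_ordK.
Qed.

Lemma rev_conj_avoids321 s : avoids321 s -> avoids321 (rev_conj s).
Proof.
move=> av; apply/negP => /existsP [i /existsP [j /existsP [k /and4P[ij jk h1 h2]]]].
move/negP: av; apply; apply/existsP; exists (rev_ord k); apply/existsP.
exists (rev_ord j); apply/existsP; exists (rev_ord i).
rewrite !rev_conjE /= in h1 h2 *.
have := ltn_ord (s (rev_ord i)); have := ltn_ord (s (rev_ord j)).
have := ltn_ord (s (rev_ord k)); have := ltn_ord k.
by move=> *; apply/and4P; split; lia.
Qed.

Lemma exc_type_rev_conj s i :
  exc_type (rev_conj s) i = flip_step (exc_type s (rev_ord i)).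
Proof.
rewrite /exc_type rev_conjE; set a := s (rev_ord i).
have ha := ltn_ord a; have hi := ltn_ord i.
have -> : (i < rev_ord a) = (a < rev_ord i) by rewrite /=; apply/idP/idP; lia.
have -> : (rev_ord a < i) = (rev_ord i < a) by rewrite /=; apply/idP/idP; lia.
by case: (ltngtP a (rev_ord i)).
Qed.

Lemma centro_exc_type s i :
  centrosymmetric s -> exc_type s (rev_ord i) = flip_step (exc_type s i).
Proof. by move=> /centrosymmetricP {1}<-; rewrite exc_type_rev_conj rev_ordK. Qed.

(* Extended by Flat outside 'I_m so that [nsteps] applies. *)
Definition type_word s (j : nat) : step :=
  if insub j is Some i then exc_type s i else Flat.

Lemma type_word_ord s c (hc : c < m) : type_word s c = exc_type s (Ordinal hc).
Proof. by rewrite /type_word insubT. Qed.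

Lemma type_wordE s i : type_word s i = exc_type s i.
Proof. by rewrite /type_word valK. Qed.

Lemma nsteps_type_word s x c : c <= m ->
  nsteps (type_word s) x c = #|[set i : 'I_m | (i < c) && (exc_type s i == x)]|.
Proof.
elim: c => [|c IH] hc.
  rewrite nsteps0; apply/esym/eqP; rewrite cards_eq0.
  by apply/eqP/setP => v; rewrite !inE.
rewrite nstepsS IH ?(ltnW hc) //.
rewrite (cardsD1 (Ordinal hc) [set i : 'I_m | (i < c.+1) && (exc_type s i == x)]).
rewrite inE /= ltnSn /=.
rewrite (type_word_ord s hc) addnC; congr (_ + _).
apply: eq_card => v; rewrite !inE ltnS -val_eqE /=.
by case: (ltngtP v c).
Qed.

Lemma type_word_ballot s c : involution s -> c <= m ->
  nsteps (type_word s) Down c <= nsteps (type_word s) Up c.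
Proof.
move=> inv_s hc; rewrite !nsteps_type_word //.
rewrite -(card_imset _ (@perm_inj _ s)); apply: subset_leq_card.
apply/subsetP => y /imsetP [i]; rewrite !inE exc_typeD => /andP[ic hi] ->.
by rewrite exc_typeU (involutionK inv_s) hi andbT (ltn_trans hi ic).
Qed.

Lemma type_word_flat_balanced s c : involution s -> avoids321 s -> c < m ->
  type_word s c = Flat -> nsteps (type_word s) Up c = nsteps (type_word s) Down c.
Proof.
move=> inv_s av hc cF; apply/eqP.
rewrite eqn_leq (type_word_ballot inv_s (ltnW hc)) andbT.
rewrite !(nsteps_type_word _ _ (ltnW hc)).
set J := Ordinal hc.
have sJ : s J = J.
  by apply: val_inj; apply/eqP; rewrite -exc_typeF -(type_word_ord s hc) cF.
rewrite -(card_imset _ (@perm_inj _ s)); apply: subset_leq_card.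
apply/subsetP => y /imsetP [i]; rewrite !inE exc_typeU => /andP[iJ hi] ->.
rewrite exc_typeD (involutionK inv_s) hi andbT.
have := avoids321_wexc_max av (iJ : i < J) (_ : J <= s J); rewrite sJ => /(_ (leqnn _)).
rewrite leq_eqVlt => /orP[/eqP siJ|] //.
by move: iJ; rewrite (perm_inj (etrans (val_inj siJ) (esym sJ))) /= ltnn.
Qed.

End ExcedanceWord.

(** * The involution of a Motzkin path *)

Section MotzkinPerm.
Variables (W : nat -> step) (m : nat).
Hypothesis motzW : motzkin_path W m.

Definition positions (x : step) : seq nat := [seq j <- iota 0 m | W j == x].

Lemma index_positions x j : j < m -> W j = x -> index j (positions x) = nsteps W x j.
Proof.
move=> hj Wj.
rewrite /positions (_ : m = j + (m - j.+1).+1); last by lia.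
rewrite iotaD add0n filter_cat index_cat mem_filter mem_iota add0n ltnn !andbF.
by rewrite size_filter /= Wj eqxx /= eqxx addn0.
Qed.

Lemma nth_positions x k : k < nsteps W x m ->
  [/\ nth 0 (positions x) k < m, W (nth 0 (positions x) k) = x &
      nsteps W x (nth 0 (positions x) k) = k].
Proof.
move=> hk; have hs : k < size (positions x) by rewrite size_filter.
have := mem_nth 0 hs; rewrite mem_filter mem_iota add0n => /andP[/eqP Wk hk'].
split => //; rewrite -index_positions //.
by apply: index_uniq => //; exact: filter_uniq (iota_uniq _ _).
Qed.

Definition partner (j : nat) : nat :=
  match W j with
  | Up => nth 0 (positions Down) (nsteps W Up j)
  | Down => nth 0 (positions Up) (nsteps W Down j)
  | Flat => j
  end.

Lemma partnerU j : j < m -> W j = Up ->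
  [/\ partner j < m, W (partner j) = Down,
      nsteps W Down (partner j) = nsteps W Up j & j < partner j].
Proof.
move=> hj Wj; rewrite /partner Wj; case: motzW => ballot balanced _.
have hk : nsteps W Up j < nsteps W Down m by rewrite -balanced nsteps_lt.
case: (nth_positions hk); set y := nth _ _ _ => hy Wy ny; split => //.
rewrite ltnNge; apply/negP => hyj.
have hyj' : y < j.
  by rewrite ltn_neqAle hyj andbT; apply/eqP => e; move: Wy; rewrite e Wj.
have := ballot y.+1 (leq_trans hyj' (ltnW hj)); rewrite !nstepsS Wy /= ny.
by have := leq_nsteps W Up hyj; lia.
Qed.

Lemma partnerD j : j < m -> W j = Down ->
  [/\ partner j < m, W (partner j) = Up,
      nsteps W Up (partner j) = nsteps W Down j & partner j < j].
Proof.
move=> hj Wj; rewrite /partner Wj; case: motzW => ballot balanced _.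
have hk : nsteps W Down j < nsteps W Up m by rewrite balanced nsteps_lt.
case: (nth_positions hk); set y := nth _ _ _ => hy Wy ny; split => //.
rewrite ltnNge; apply/negP => hyj.
have hyj' : j < y.
  by rewrite ltn_neqAle hyj andbT; apply/eqP => e; move: Wy; rewrite -e Wj.
have := ballot j.+1 hj; rewrite !nstepsS Wj /=.
by have := leq_nsteps W Up hyj; lia.
Qed.

Lemma partnerF j : W j = Flat -> partner j = j.
Proof. by move=> Wj; rewrite /partner Wj. Qed.

Lemma partner_lt j : j < m -> partner j < m.
Proof.
move=> hj; case Wj: (W j); last by rewrite partnerF.
  by case: (partnerU hj Wj).
by case: (partnerD hj Wj).
Qed.

Lemma partnerK j : j < m -> partner (partner j) = j.
Proof.
move=> hj; case Wj: (W j); last by rewrite !partnerF.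
  case: (partnerU hj Wj) => _ Wp np _.
  rewrite {1}/partner Wp np -(index_positions hj Wj) nth_index //.
  by rewrite mem_filter mem_iota Wj eqxx hj.
case: (partnerD hj Wj) => _ Wp np _.
rewrite {1}/partner Wp np -(index_positions hj Wj) nth_index //.
by rewrite mem_filter mem_iota Wj eqxx hj.
Qed.

Lemma partner_mono i j : i < j -> j < m -> (W i == Down) = (W j == Down) ->
  partner i < partner j.
Proof.
move=> ij hj same; have hi := ltn_trans ij hj.
have matched_lt (x y : step) : nsteps W x i < nsteps W x j ->
    nsteps W y (partner i) = nsteps W x i -> nsteps W y (partner j) = nsteps W x j ->
    partner i < partner j.
  move=> hlt ei ej; rewrite ltnNge; apply/negP => h.
  by move: hlt; rewrite -ei -ej ltnNge leq_nsteps.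
case: motzW => _ _ flat.
case Wi: (W i); case Wj: (W j); rewrite Wi Wj // in same.
- case: (partnerU hi Wi) => _ _ ni _; case: (partnerU hj Wj) => _ _ nj _.
  exact: matched_lt (nsteps_lt ij Wi) ni nj.
- case: (partnerU hi Wi) => _ _ ni _.
  apply: matched_lt (nsteps_lt ij Wi) ni _.
  by rewrite (partnerF Wj) (flat j hj Wj).
- case: (partnerD hi Wi) => _ _ ni _; case: (partnerD hj Wj) => _ _ nj _.
  exact: matched_lt (nsteps_lt ij Wi) ni nj.
- by case: (partnerU hj Wj) => _ _ _ jp; rewrite partnerF // (ltn_trans ij jp).
- by rewrite !partnerF.
Qed.

(* Among i, j, k two agree on being a Down step, and [partner] is increasing
   on each of the two classes. *)
Lemma partner_avoids321 i j k : i < j -> j < k -> k < m ->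
  partner j < partner i -> partner k < partner j -> False.
Proof.
move=> ij jk hk h1 h2; have hj := ltn_trans jk hk.
case e1: (W i == Down); case e2: (W j == Down); case e3: (W k == Down).
all: first
  [ have := partner_mono ij hj (etrans e1 (esym e2)); rewrite ltnNge (ltnW h1) //
  | have := partner_mono jk hk (etrans e2 (esym e3)); rewrite ltnNge (ltnW h2) //
  | have := partner_mono (ltn_trans ij jk) hk (etrans e1 (esym e3));
    rewrite ltnNge (ltnW (ltn_trans h2 h1)) // ].
Qed.

Definition partner_ord (i : 'I_m) : 'I_m := insubd i (partner i).

Lemma partner_ordE i : val (partner_ord i) = partner i.
Proof. by rewrite val_insubd partner_lt. Qed.

Lemma partner_ord_inj : injective partner_ord.
Proof.
move=> a b e; apply: val_inj.
by have := congr1 (fun x : 'I_m => partner x) e; rewrite /= !partner_ordE !partnerK.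
Qed.

Definition motzkin_perm : {perm 'I_m} := perm partner_ord_inj.

Lemma motzkin_permE i : val (motzkin_perm i) = partner i.
Proof. by rewrite permE partner_ordE. Qed.

Lemma motzkin_perm_involution : involution motzkin_perm.
Proof. by apply/forallP => i; apply/eqP/val_inj; rewrite !motzkin_permE partnerK. Qed.

Lemma exc_type_motzkin_perm i : exc_type motzkin_perm i = W i.
Proof.
rewrite /exc_type !motzkin_permE; have hi := ltn_ord i; case Wi: (W i).
- by case: (partnerU hi Wi) => _ _ _ ->.
- by case: (partnerD hi Wi) => _ _ _ pi; rewrite pi ltnNge (ltnW pi).
- by rewrite partnerF // ltnn.
Qed.

Lemma motzkin_perm_avoids321 : avoids321 motzkin_perm.
Proof.
apply/negP => /existsP [i /existsP [j /existsP [k /and4P[ij jk h1 h2]]]].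
rewrite !motzkin_permE in h1 h2.
exact: (partner_avoids321 ij jk (ltn_ord k) h1 h2).
Qed.

End MotzkinPerm.

(** * Centrosymmetric 321-avoiding involutions and prefix words *)

Section HalfWord.
Variable n : nat.

(* The excedance word of a centrosymmetric permutation of 'I_2n with first
   half u: the second half is u reversed and flipped. *)
Definition mirror (u : seq step) (j : nat) : step :=
  if j < n then nth Flat u j else flip_step (nth Flat u (n.*2.-1 - j)).

Lemma nsteps_mirror_low u x c : c <= n -> nsteps (mirror u) x c = nsteps (nth Flat u) x c.
Proof. by move=> hc; apply: eq_nsteps => j hj; rewrite /mirror (leq_trans hj hc). Qed.

Lemma nsteps_mirror_high u x d : d <= n ->
  nsteps (mirror u) x (n + d) + nsteps (nth Flat u) (flip_step x) (n - d) =
  nsteps (nth Flat u) x n + nsteps (nth Flat u) (flip_step x) n.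
Proof.
elim: d => [|d IH] hd; first by rewrite addn0 subn0 nsteps_mirror_low.
rewrite addnS nstepsS.
move: (IH (ltnW hd)); rewrite (_ : n - d = (n - d.+1).+1) ?nstepsS; last by lia.
have -> : mirror u (n + d) = flip_step (nth Flat u (n - d.+1)).
  rewrite /mirror ltnNge leq_addr /=; congr (flip_step (nth Flat u _)).
  by rewrite -addnn; lia.
by rewrite flip_step_eq; lia.
Qed.

Lemma mirror_motzkin u : size u = n -> motzkin_prefix u -> motzkin_path (mirror u) n.*2.
Proof.
move=> size_u /motzkin_prefixP []; rewrite size_u => ballot flat.
have hD := nsteps_mirror_high u Down; have hU := nsteps_mirror_high u Up.
rewrite /= in hD hU; have n2 : n.*2 = n + n by rewrite addnn.
split.
- move=> c hc; case: (leqP c n) => hcn; first by rewrite !nsteps_mirror_low // ballot.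
  have hd : c - n <= n by lia.
  have := hD _ hd; have := hU _ hd; rewrite subnKC ?(ltnW hcn) //.
  by have := ballot (n - (c - n)) (leq_subr _ _); lia.
- by have := hD _ (leqnn n); have := hU _ (leqnn n); rewrite subnn n2 !nsteps0; lia.
move=> j hj jF; case: (ltnP j n) => hjn.
  rewrite !nsteps_mirror_low ?(ltnW hjn) //; apply: flat => //.
  by move: jF; rewrite /mirror hjn.
have hd : j - n < n by lia.
have uF : nth Flat u (n - (j - n).+1) = Flat.
  move: jF; rewrite /mirror ltnNge hjn /= => /eqP; rewrite flip_step_eq => /eqP.
  by rewrite (_ : n.*2.-1 - j = n - (j - n).+1) //; lia.
have flat_at :
    nsteps (nth Flat u) Up (n - (j - n).+1) = nsteps (nth Flat u) Down (n - (j - n).+1).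
  by apply: (flat _ _ uF); lia.
have := hD _ (ltnW hd); have := hU _ (ltnW hd); rewrite subnKC //.
by rewrite (_ : n - (j - n) = (n - (j - n).+1).+1) ?nstepsS ?uF /=; lia.
Qed.

Lemma mirror_rev u (i : 'I_n.*2) : mirror u (rev_ord i) = flip_step (mirror u i).
Proof.
have hi := ltn_ord i; have n2 : n.*2 = n + n by rewrite addnn.
rewrite /mirror /=; case: (ltnP i n) => hin.
  rewrite (_ : (n.*2 - i.+1 < n) = false); last by apply/negbTE; lia.
  by congr (flip_step (nth Flat u _)); lia.
rewrite (_ : n.*2 - i.+1 < n) ?flip_stepK; last by lia.
by congr (nth Flat u _); lia.
Qed.

Definition half_word (s : {perm 'I_n.*2}) : seq step := mkseq (type_word s) n.

Lemma half_word_prefix s : s \in ICinv321 n.*2 -> half_word s \in prefix_words n.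
Proof.
rewrite inE => /and3P[_ inv_s av].
rewrite mem_prefix_words size_mkseq eqxx /=; apply/motzkin_prefixP.
have half_nsteps x c : c <= n -> nsteps (nth Flat (half_word s)) x c = nsteps (type_word s) x c.
  by move=> hc; apply: eq_nsteps => j hj; rewrite nth_mkseq // (leq_trans hj hc).
have n2 : n.*2 = n + n by rewrite addnn.
rewrite size_mkseq; split=> [c hc|j hj jF]; rewrite !half_nsteps ?(ltnW hj) //.
  by apply: type_word_ballot => //; lia.
apply: type_word_flat_balanced => //; first by lia.
by move: jF; rewrite nth_mkseq.
Qed.

Lemma half_word_inj : {in ICinv321 n.*2 &, injective half_word}.
Proof.
move=> s t; rewrite !inE => /and3P[cs inv_s av_s] /and3P[ct inv_t av_t] e.
apply: exc_type_inj => // i.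
have low (k : 'I_n.*2) : k < n -> exc_type s k = exc_type t k.
  move=> hk; rewrite -!type_wordE.
  by have := congr1 (nth Flat ^~ k) e; rewrite /half_word !nth_mkseq.
case: (ltnP i n) => hin; first exact: low.
have n2 : n.*2 = n + n by rewrite addnn.
have hr : rev_ord i < n by rewrite /=; have := ltn_ord i; lia.
by rewrite -[i]rev_ordK (centro_exc_type _ cs) (centro_exc_type _ ct) low.
Qed.

Lemma half_word_surj u : u \in prefix_words n ->
  exists2 s, s \in ICinv321 n.*2 & half_word s = u.
Proof.
rewrite mem_prefix_words => /andP[/eqP size_u pu].
have motz := mirror_motzkin size_u pu.
set s := motzkin_perm motz.
have inv_s : involution s := motzkin_perm_involution motz.
have av_s : avoids321 s := motzkin_perm_avoids321 motz.
have type_s : forall i, exc_type s i = mirror u i := exc_type_motzkin_perm motz.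
have centro_s : rev_conj s = s.
  apply: exc_type_inj (rev_conj_involution inv_s) (rev_conj_avoids321 av_s) inv_s av_s _.
  by move=> i; rewrite exc_type_rev_conj !type_s mirror_rev flip_stepK.
exists s; first by rewrite inE inv_s av_s (introT (centrosymmetricP _) centro_s).
apply: (@eq_from_nth _ Flat); rewrite size_mkseq ?size_u // => j hj.
have hjm : j < n.*2 by rewrite -addnn ltn_addr.
by rewrite nth_mkseq // (type_word_ord s hjm) type_s /mirror /= hj.
Qed.

Lemma sum_ICinv321_half_word (R : nmodType) (G : seq step -> R) :
  (\sum_(s in ICinv321 n.*2) G (half_word s) = \sum_(u <- prefix_words n) G u)%R.
Proof.
transitivity (\sum_(u <- map half_word (enum (ICinv321 n.*2))) G u)%R.
  by rewrite big_map big_enum.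
apply: perm_big; apply: uniq_perm.
- rewrite map_inj_in_uniq ?enum_uniq // => a b; rewrite !mem_enum; exact: half_word_inj.
- exact: uniq_prefix_words.
move=> u; apply/mapP/idP => [[s]|/half_word_surj [s hs <-]].
  by rewrite mem_enum => hs ->; exact: half_word_prefix.
by exists s; rewrite ?mem_enum.
Qed.

Lemma DesPlus_half_word s : s \in ICinv321 n.*2 -> DesPlus s = word_des_set (half_word s).
Proof.
rewrite inE => /and3P[cs inv_s av_s].
rewrite /DesPlus /word_des_set size_mkseq; apply: eq_in_filter => i.
rewrite mem_iota => /andP[h1 h2]; have n2 : n.*2 = n + n by rewrite addnn.
have ha : i.-1 < n.*2 by lia.
have hb : i < n.*2 by lia.
set a := Ordinal ha; set b := Ordinal hb.
have -> : [exists a : 'I_(n.*2), exists b : 'I_(n.*2),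
            [&& (a : nat) == i.-1, (b : nat) == i & s b < s a]] = (s b < s a).
  apply/existsP/idP => [[a' /existsP [b' /and3P [/eqP ea /eqP eb]]]|desc].
    by rewrite (val_inj (ea : val a' = val a)) (val_inj (eb : val b' = val b)).
  by exists a; apply/existsP; exists b; rewrite /= !eqxx desc.
rewrite (descent_exc_type inv_s av_s (_ : val b = (val a).+1)) /=; last by lia.
rewrite /word_descent size_mkseq (nth_mkseq _ _ (_ : i.-1 < n)); last by lia.
rewrite (type_word_ord s ha) -/a; case: (ltnP i n) => hin.
  rewrite nth_mkseq // (type_word_ord s hb) -/b.
  by rewrite (_ : (i == n) = false) //; apply/negbTE/eqP; lia.
(* the middle descent: position n is the mirror image of position n - 1 *)
rewrite (_ : i = n) ?eqxx /= ?andbT; last by lia.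
rewrite (_ : b = rev_ord a); last by apply: val_inj; rewrite /=; lia.
by rewrite centro_exc_type // flip_step_eq /= andbb.
Qed.

End HalfWord.

Local Open Scope ring_scope.

Lemma d_poly_des_gf n : d_poly n = des_gf n.
Proof.
rewrite /d_poly /des_gf -(sum_ICinv321_half_word n (fun u => 'X^(word_des u))).
by apply: eq_bigr => s hs; rewrite /desPlus DesPlus_half_word.
Qed.

Lemma p_poly_maj_gf n : p_poly n = maj_gf n.
Proof.
rewrite /p_poly /maj_gf -(sum_ICinv321_half_word n (fun u => 'X^(word_maj u))).
by apply: eq_bigr => s hs; rewrite /majPlus DesPlus_half_word.
Qed.

Theorem mainTheorem7 (n : nat) (hn : (2 <= n)%N) :
  d_poly n = 2%:R * d_poly n.-1 + ('X - 1) * d_poly n.-2 /\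
  p_poly n = (1 + 'X) * p_poly n.-1 + ('X^n - 'X) * p_poly n.-2.
Proof.
case: n hn => [|[|k]] // _.
rewrite !d_poly_des_gf !p_poly_maj_gf.
by split; [exact: des_gf_rec | exact: maj_gf_rec].
Qed.
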